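(* Let $d\in\mathbb{Z}^+$ and let $\Pi=\langle Q,Q_0,Q_1,q_{init},\delta\rangle$ be a 1-aware population protocol computing the predicate $R(n)=\mathbb{I}\{n\ge d\}$. For $q\in Q$ let $f(q)$ be the minimal $n\in\mathbb{Z}^+$ such that $q$ can occur from $I_n$, and $f(q)=+\infty$ if there is no such $n$. If $a<b$ are two consecutive elements of the set $f(Q)\cap\mathbb{Z}^+$ (i.e. $a,b\in f(Q)\cap\mathbb{Z}^+$ and no element of $f(Q)$ lies strictly between them), then $b\le 2a$.
   Context: A population protocol is a tuple $\Pi=\langle Q,Q_0,Q_1,q_{init},\delta\rangle$ where $Q$ is a finite set of states, $Q=Q_0\sqcup Q_1$ (disjoint union), $q_{init}\in Q$ is the initial state, and $\delta\colon Q^2\to 2^{Q^2}\setminus\{\varnothing\}$ is the transition function. For $n\in\mathbb{Z}^+$, an $n$-size configuration is a function $C\colon[n]\to Q$, where $[n]=\{1,\dots,n\}$; the initial configuration $I_n$ maps every element to $q_{init}$. A pair $(C_1,C_2)$ of $n$-size configurations is a transition if there are distinct $i,j\in[n]$ with $(C_2(i),C_2(j))\in\delta(C_1(i),C_1(j))$ and $C_2(k)=C_1(k)$ for all $k\ne i,j$ (the pair $(i,j)$ is ordered). $D$ is reachable from $C$ if there is a finite sequence $C=C_1,\dots,C_k=D$ ($k\ge1$) of configurations with each $(C_i,C_{i+1})$ a transition. A state $q$ can occur from a configuration $C\colon[n]\to Q$ if some configuration $D$ reachable from $C$ has $D(i)=q$ for some $i\in[n]$. An execution is an infinite sequence $(C_i)_{i\ge1}$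 with $C_1=I_n$ for some $n$ and each $(C_i,C_{i+1})$ a transition; it is fair if whenever a configuration $C$ occurs infinitely often in it and $D$ is reachable from $C$, then $D$ also occurs infinitely often. $\Pi$ is a 1-aware population protocol computing $R\colon\mathbb{Z}^+\to\{0,1\}$ if for every $n\in\mathbb{Z}^+$: if $R(n)=0$ then every configuration $C$ reachable from $I_n$ satisfies $C([n])\subseteq Q_0$; and if $R(n)=1$ then for every fair execution $(C_i)_{i\ge1}$ with $C_1=I_n$ there is $i_0$ such that $C_i([n])\subseteq Q_1$ for all $i\ge i_0$. *)

From mathcomp Require Import all_boot.
Set Implicit Arguments. Unset Strict Implicit. Unset Printing Implicit Defensive.

(* A population protocol over a finite state type Q:
   Q1 : pred Q gives the partition Q = Q0 ⊔ Q1 with Q0 = complement of Q1,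
   qinit : initial state, delta p q : the set of possible outcome pairs
   (nonemptiness of delta p q is a hypothesis of the theorem). *)

Section Protocol.
Variables (Q : finType) (Q1 : pred Q) (qinit : Q) (delta : Q -> Q -> pred (Q * Q)).

Definition config (n : nat) := {ffun 'I_n -> Q}.

Definition init_config (n : nat) : config n := [ffun => qinit].

Definition transition (n : nat) (C1 C2 : config n) : Prop :=
  exists i j : 'I_n, i != j /\ delta (C1 i) (C1 j) (C2 i, C2 j) /\
    (forall k, k != i -> k != j -> C2 k = C1 k).

Inductive reachable (n : nat) : config n -> config n -> Prop :=
| reach_refl C : reachable C C
| reach_step C D E : transition C D -> reachable D E -> reachable C E.

Definition can_occur (q : Q) (n : nat) : Prop :=
  exists D : config n, reachable (init_config n) D /\ exists i, D i = q.

Definition execution (n : nat) (e : nat -> config n) : Prop :=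
  e 0 = init_config n /\ forall t, transition (e t) (e t.+1).

Definition fair (n : nat) (e : nat -> config n) : Prop :=
  forall C : config n, (forall N, exists t, N <= t /\ e t = C) ->
    forall D, reachable C D -> forall N, exists t, N <= t /\ e t = D.

Definition one_aware_computes (R : nat -> bool) : Prop :=
  forall n, 0 < n ->
    (R n = false -> forall C, reachable (init_config n) C -> forall i, ~~ Q1 (C i)) /\
    (R n = true -> forall e : nat -> config n, execution e -> fair e ->
       exists i0, forall i, i0 <= i -> forall k, Q1 (e i k)).

(* f q = m (with m a positive integer): m is the least positive n such that
   q can occur from I_n. *)
Definition f_is (q : Q) (m : nat) : Prop :=
  0 < m /\ can_occur q m /\ forall k, 0 < k -> k < m -> ~ can_occur q k.

Definition in_fQ (m : nat) : Prop := exists q, f_is q m.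

End Protocol.

From Stdlib Require Import Classical Wf_nat.
From mathcomp Require Import all_boot.

(* Let S be the set of states that can occur from some I_k with 0 < k <= a.
   Two agents whose states occur from I_k1 and I_k2 can be simulated side by
   side in I_(k1+k2), so every output of an interaction of two S-states occurs
   from some I_k with k <= 2a.  Run I_b up to a configuration containing q with
   f(q) = b > a: q is not in S, so some transition first produces a state r
   outside S, and then a < f(r) <= 2a.  As no value of f lies strictly between
   a and b, b <= f(r) <= 2a. *)

Set Implicit Arguments.
Unset Strict Implicit.
Unset Printing Implicit Defensive.

Section Occurrence.
Variables (Q : finType) (qinit : Q) (delta : Q -> Q -> pred (Q * Q)).

Local Notation reachable := (@reachable Q delta _).
Local Notation transition := (@transition Q delta _).
Local Notation can_occur := (can_occur qinit delta).

Lemma reachable_trans n (C D E : config Q n) :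
  reachable C D -> reachable D E -> reachable C E.
Proof. by elim=> [//|C1 D1 E1 CD1 _ IH] /IH; apply: reach_step. Qed.

Definition config_upd n (C : config Q n) (i j : 'I_n) (x y : Q) : config Q n :=
  [ffun k => if k == i then x else if k == j then y else C k].

Lemma transition_upd n (C : config Q n) i j x y :
  i != j -> delta (C i) (C j) (x, y) -> transition C (config_upd C i j x y).
Proof.
move=> neq_ij dCxy; exists i, j; split=> //; split.
  by rewrite !ffunE eqxx eq_sym (negbTE neq_ij) eqxx.
by move=> k /negbTE ki /negbTE kj; rewrite ffunE ki kj.
Qed.

Lemma reachable_embed n N (h : 'I_n -> 'I_N) (C D : config Q n) :
  injective h -> reachable C D ->
  forall E : config Q N, (forall i, E (h i) = C i) ->
  exists2 E', reachable E E' &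
    (forall i, E' (h i) = D i) /\ (forall k, (forall i, k != h i) -> E' k = E k).
Proof.
move=> inj_h; elim=> [C0|C0 D0 E0 [i [j [neq_ij [dC oth]]]] _ IH] E EC.
  by exists E; [apply: reach_refl|split].
pose E1 := config_upd E (h i) (h j) (D0 i) (D0 j).
have E1D0 l : E1 (h l) = D0 l.
  rewrite ffunE !(inj_eq inj_h).
  case: (eqVneq l i) => [->//|li]; case: (eqVneq l j) => [->//|lj].
  by rewrite EC oth.
have [E' E1E' [E'D0 E'E1]] := IH _ E1D0.
exists E'.
  apply: reach_step E1E'; apply: transition_upd; last by rewrite !EC.
  by rewrite (inj_eq inj_h).
split=> // k notin_h; rewrite E'E1 // ffunE.
by rewrite (negbTE (notin_h i)) (negbTE (notin_h j)).
Qed.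

Lemma reachable_init_add k1 k2 (D1 : config Q k1) (D2 : config Q k2) :
  reachable (init_config qinit k1) D1 -> reachable (init_config qinit k2) D2 ->
  exists2 E, reachable (init_config qinit (k1 + k2)) E &
    (forall i, E (lshift k2 i) = D1 i) /\ (forall j, E (rshift k1 j) = D2 j).
Proof.
move=> reach1 reach2.
have [E1 reachE1 [E1D1 E1init]] :=
  reachable_embed (@lshift_inj k1 k2) reach1 (E := init_config qinit _)
    (fun i => ltac:(by rewrite !ffunE)).
have [E2 reachE2 [E2D2 E2E1]] := reachable_embed (@rshift_inj k1 k2) reach2 (E := E1)
  (fun j => ltac:(by rewrite E1init ?ffunE // => i; rewrite eq_rlshift)).
exists E2; first exact: reachable_trans reachE1 reachE2.
by split=> // i; rewrite E2E1 // => j; rewrite eq_lrshift.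
Qed.

Lemma can_occur_interaction p p' r r' k1 k2 :
  can_occur p k1 -> can_occur p' k2 -> delta p p' (r, r') ->
  can_occur r (k1 + k2) /\ can_occur r' (k1 + k2).
Proof.
move=> [D1 [reach1 [i1 D1p]]] [D2 [reach2 [i2 D2p']]] dpp'.
have [E reachE [ED1 ED2]] := reachable_init_add reach1 reach2.
pose E' := config_upd E (lshift k2 i1) (rshift k1 i2) r r'.
have reachE' : reachable (init_config qinit (k1 + k2)) E'.
  apply: reachable_trans reachE (reach_step _ (reach_refl _ _)).
  by apply: transition_upd; rewrite ?eq_lrshift // ED1 ED2 D1p D2p'.
split; exists E'; split=> //.
  by exists (lshift k2 i1); rewrite ffunE eqxx.
by exists (rshift k1 i2); rewrite ffunE eq_rlshift eqxx.
Qed.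

Lemma can_occur0 q : ~ can_occur q 0.
Proof. by case=> D [_ [[]]]. Qed.

Lemma can_occur_f_is q n : can_occur q n -> exists2 m, m <= n & f_is qinit delta q m.
Proof.
move=> occ_n.
have [m [[occ_m m_least] _]] :=
  dec_inh_nat_subset_has_unique_least_element (can_occur q)
    (fun k => classic (can_occur q k)) (ex_intro _ n occ_n).
exists m; first exact/leP/m_least.
split; last split=> // k _ km occ_k.
  by case: m occ_m {m_least} => // /can_occur0.
by move: km; rewrite ltnNge => /negP; apply; apply/leP/m_least.
Qed.

Definition occurs_within (a : nat) (q : Q) : Prop :=
  exists2 k, 0 < k <= a & can_occur q k.

Lemma occurs_within_leq a b q : a <= b -> occurs_within a q -> occurs_within b q.
Proof.
by move=> ab [k /andP[k_gt0 ka] occ_k]; exists k; rewrite ?k_gt0 ?(leq_trans ka ab).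
Qed.

Lemma transition_occurs_within a n (C D : config Q n) :
  transition C D -> (forall i, occurs_within a (C i)) ->
  forall l, occurs_within (a + a) (D l).
Proof.
move=> [i [j [_ [dC oth]]]] within_C l.
have [[k1 /andP[k1_gt0 k1a] occ1] [k2 /andP[_ k2a] occ2]] := (within_C i, within_C j).
have [occ_i occ_j] := can_occur_interaction occ1 occ2 dC.
have k12 : 0 < k1 + k2 <= a + a by rewrite addn_gt0 k1_gt0 leq_add.
case: (eqVneq l i) => [->|li]; first by exists (k1 + k2).
case: (eqVneq l j) => [->|lj]; first by exists (k1 + k2).
by rewrite oth //; apply: occurs_within_leq (leq_addr a a) _.
Qed.

Lemma reachable_occurs_within a n (C E : config Q n) :
  reachable C E -> (forall i, occurs_within a (C i)) ->
  (forall i, occurs_within a (E i)) \/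
  exists r, ~ occurs_within a r /\ occurs_within (a + a) r.
Proof.
elim=> [//|C0 D0 E0 CD0 _ IH] within_C0; first by left.
case: (classic (forall l, occurs_within a (D0 l))) => [|/not_all_ex_not [l notin_l]].
  exact: IH.
by right; exists (D0 l); split; last exact: transition_occurs_within CD0 within_C0 l.
Qed.

End Occurrence.

Theorem lemma1 (d : nat) (Q : finType) (Q1 : pred Q) (qinit : Q)
    (delta : Q -> Q -> pred (Q * Q)) :
  0 < d ->
  (forall p q, exists r, delta p q r) ->
  one_aware_computes Q1 qinit delta (fun n => d <= n) ->
  forall a b : nat, a < b ->
    in_fQ qinit delta a -> in_fQ qinit delta b ->
    (forall c, a < c -> c < b -> ~ in_fQ qinit delta c) ->
    b <= 2 * a.
Proof.
move=> _ _ _ a b ab [_ [a_gt0 _]] [q [_ [[D [reachD [i Di]]] q_min]]] gap.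
have init_within j : occurs_within qinit delta a (init_config qinit b j).
  exists 1; first by rewrite a_gt0.
  by exists (init_config qinit 1); split; [apply: reach_refl | exists ord0; rewrite !ffunE].
case: (reachable_occurs_within reachD init_within)
  => [within_D|[r [notin_r [N /andP[_ Na] occ_N]]]].
  have [k /andP[k_gt0 ka]] := within_D i; rewrite Di.
  by move/(q_min k k_gt0 (leq_ltn_trans ka ab)).
have [m mN fr] := can_occur_f_is occ_N.
have [m_gt0 [occ_m _]] := fr.
have am : a < m.
  by rewrite ltnNge; apply/negP => ma; apply: notin_r; exists m; rewrite ?m_gt0.
have bm : b <= m by rewrite leqNgt; apply/negP => mb; apply: (gap m am mb); exists r.
by rewrite mul2n -addnn (leq_trans bm (leq_trans mN Na)).
Qed.
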